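(* Assume (A2) and (A3). Then for every stage $l\ge1$ of Method (BCV), the number of inner iterations (changes of the index $k$) is finite, i.e. after finitely many steps Step 1 finds no admissible pair and the stage ends with $z^l=x^k$.
   Context: Setting: limit problem $\min_{x\in D}f(x)$ with $D=\{x\in X:\langle a,x\rangle=\beta\}$, $X=\prod_{i=1}^n[\alpha'_i,\alpha''_i]$. Approximating problems $\min_{x\in D_l}f_l(x)$, $l=0,1,2,\dots$, with $D_l=\{x\in X_l:\langle a^l,x\rangle=\beta_l\}$, $X_l=\prod_{i=1}^n[\alpha'_{il},\alpha''_{il}]$, $a^l=(a_{1l},\dots,a_{nl})^\top$. (A2): for each $l$, $D_l\neq\varnothing$, $a_{il}>0$ and $-\infty<\alpha'_{il}<\alpha''_{il}<+\infty$ for all $i$; and $\alpha'_{il}\to\alpha'_i$, $\alpha''_{il}\to\alpha''_i$, $a^l\to a$, $\beta_l\to\beta$ as $l\to\infty$. (A3): each $f_l$ is continuously differentiable on (a neighborhood of) $X_l$, and whenever $y^l\in D_l$ and $y^l\to\bar y$, the gradients satisfy $\nabla f_l(y^l)\to\bar g$ for some $\bar g\in\partial^{\uparrow}f(\bar y)$ (Clarke generalized gradient). Notation: $g_{il}(x)=\partial f_l(x)/\partial x_i$, $h_{il}(x)=g_{il}(x)/a_{il}$; given positive sequence $\{\varepsilon_l\}$, $I_l^-(x)=\{i\in I: x_i\ge\alpha'_{il}+\varepsilon_l/a_{il}\}$, $I_l^+(x)=\{i\in I: x_i\le\alpha''_{il}-\varepsilon_l/a_{il}\}$, where $I=\{1,\dots,n\}$;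 $\pi_V$ is Euclidean projection onto $V$. Method (BCV): choose $z^0\in D_0$, $\sigma\in(0,1)$, $\theta\in(0,1)$, positive sequences $\delta_l\searrow0$, $\varepsilon_l\searrow0$; set $l=1$. Stage $l$: set $k=0$, $x^0=\pi_{D_l}(z^{l-1})$. Step 1: if there exist $i\in I_l^-(x^k)$, $j\in I_l^+(x^k)$ with $h_{il}(x^k)-h_{jl}(x^k)\ge\delta_l$, choose any such pair, set $i_k=i$, $j_k=j$, $\gamma_k=\min\{a_{il}(x^k_i-\alpha'_{il}),\,a_{jl}(\alpha''_{jl}-x^k_j)\}$ and go to Step 2; otherwise set $z^l=x^k$, $l:=l+1$ and start the next stage. Step 2: define $d^k$ by $d^k_i=-1/a_{il}$, $d^k_j=1/a_{jl}$, $d^k_s=0$ for $s\ne i,j$; let $m$ be the smallest nonnegative integer with $f_l(x^k+\theta^m\gamma_kd^k)\le f_l(x^k)+\sigma\theta^m\gamma_k\langle\nabla f_l(x^k),d^k\rangle$; set $\lambda_k=\theta^m\gamma_k$, $x^{k+1}=x^k+\lambda_kd^k$, $k:=k+1$, and return to Step 1. *)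

(* classical real numbers. Vectors of R^n are modelled as
   nat -> R; only the coordinates 0..n-1 are meaningful (index set
   I = {0,...,n-1}, corresponding to the paper's {1,...,n}). *)
From Stdlib Require Import Reals Lra Lia Arith.
Open Scope R_scope.

Definition vec := nat -> R.

Fixpoint vsum (n : nat) (u : nat -> R) : R :=
  match n with O => 0 | S m => vsum m u + u m end.

Definition dot (n : nat) (u v : vec) : R := vsum n (fun i => u i * v i).
Definition norm (n : nat) (u : vec) : R := sqrt (dot n u u).
Definition vsub (u v : vec) : vec := fun i => u i - v i.
Definition vadd (u v : vec) : vec := fun i => u i + v i.
Definition vscal (t : R) (u : vec) : vec := fun i => t * u i.

Definition vec_cv (n : nat) (y : nat -> vec) (ybar : vec) : Prop :=
  forall i, (i < n)%nat -> Un_cv (fun l => y l i) (ybar i).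

Definition box (n : nat) (lo hi : vec) (x : vec) : Prop :=
  forall i, (i < n)%nat -> lo i <= x i <= hi i.

Definition Dset (n : nat) (lo hi a : vec) (beta : R) (x : vec) : Prop :=
  box n lo hi x /\ dot n a x = beta.

Definition is_open (n : nat) (U : vec -> Prop) : Prop :=
  forall x, U x -> exists r, 0 < r /\ forall y, norm n (vsub y x) < r -> U y.

Definition has_gradient_on (n : nat) (U : vec -> Prop) (f : vec -> R) (g : vec -> vec)
  : Prop :=
  forall x, U x -> forall e, 0 < e -> exists d, 0 < d /\
    forall y, norm n (vsub y x) < d ->
      Rabs (f y - f x - dot n (g x) (vsub y x)) <= e * norm n (vsub y x).

Definition grad_continuous_on (n : nat) (U : vec -> Prop) (g : vec -> vec) : Prop :=
  forall x, U x -> forall i, (i < n)%nat -> forall e, 0 < e -> exists d, 0 < d /\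
    forall y, U y -> norm n (vsub y x) < d -> Rabs (g y i - g x i) < e.

Definition C1_near (n : nat) (X : vec -> Prop) (f : vec -> R) (g : vec -> vec) : Prop :=
  exists U, is_open n U /\ (forall x, X x -> U x) /\
    has_gradient_on n U f g /\ grad_continuous_on n U g.

(* Clarke generalized directional derivative:
   f°(x; d) = limsup_{y -> x, t -> 0+} (f(y + t d) - f(y)) / t.
   clarke_dd_ge n f x d c  <->  f°(x; d) >= c  (in the extended reals). *)
Definition clarke_dd_ge (n : nat) (f : vec -> R) (x d : vec) (c : R) : Prop :=
  forall e, 0 < e -> forall r, 0 < r -> exists y t,
    norm n (vsub y x) < r /\ 0 < t < r /\
    (f (vadd y (vscal t d)) - f y) / t > c - e.

Definition clarke_subgrad (n : nat) (f : vec -> R) (x g : vec) : Prop :=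
  forall d, clarke_dd_ge n f x d (dot n g d).

Definition is_proj (n : nat) (D : vec -> Prop) (z p : vec) : Prop :=
  D p /\ forall y, D y -> norm n (vsub p z) <= norm n (vsub y z).

(* ---- Method (BCV), one stage, with stage data
   lo = alpha'_l, hi = alpha''_l, a = a^l, g = grad f_l, fl = f_l,
   eps = eps_l, delta = delta_l ---- *)

Definition hcoef (a : vec) (g : vec -> vec) (x : vec) (i : nat) : R := g x i / a i.

Definition Iminus (lo a : vec) (eps : R) (x : vec) (i : nat) : Prop :=
  x i >= lo i + eps / a i.

Definition Iplus (hi a : vec) (eps : R) (x : vec) (i : nat) : Prop :=
  x i <= hi i - eps / a i.

Definition admissible (n : nat) (lo hi a : vec) (g : vec -> vec) (eps delta : R)
  (x : vec) (i j : nat) : Prop :=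
  (i < n)%nat /\ (j < n)%nat /\ Iminus lo a eps x i /\ Iplus hi a eps x j /\
  hcoef a g x i - hcoef a g x j >= delta.

Definition gammak (lo hi a : vec) (x : vec) (i j : nat) : R :=
  Rmin (a i * (x i - lo i)) (a j * (hi j - x j)).

Definition dirk (a : vec) (i j : nat) : vec :=
  fun s => if Nat.eqb s i then - (1 / a i)
           else if Nat.eqb s j then 1 / a j else 0.

Definition armijo (n : nat) (lo hi a : vec) (fl : vec -> R) (g : vec -> vec)
  (sigma theta : R) (x : vec) (i j : nat) (m : nat) : Prop :=
  let gam := gammak lo hi a x i j in
  let d := dirk a i j in
  fl (vadd x (vscal (theta ^ m * gam) d))
    <= fl x + sigma * (theta ^ m * gam) * dot n (g x) d.

Definition bcv_step (n : nat) (lo hi a : vec) (fl : vec -> R) (g : vec -> vec)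
  (eps delta sigma theta : R) (x : vec) (i j : nat) (x' : vec) : Prop :=
  admissible n lo hi a g eps delta x i j /\
  exists m : nat,
    armijo n lo hi a fl g sigma theta x i j m /\
    (forall m', (m' < m)%nat -> ~ armijo n lo hi a fl g sigma theta x i j m') /\
    (forall s, x' s = x s + (theta ^ m * gammak lo hi a x i j) * dirk a i j s).

From Stdlib Require Import Reals Lra Lia ClassicalEpsilon FunctionalExtensionality Classical.
Open Scope R_scope.

(* If a stage never ends, every inner step is an Armijo step along a direction
   of slope at most [- delta], so [f_l] drops by at least [sigma * delta] times
   the step length.  The iterates stay in the compact box, so [f_l] is bounded
   below along them and the step lengths tend to 0.  A step shorter than
   [eps <= gamma_k] comes from backtracking; near an accumulation point of the
   iterates, uniform continuity of the gradient forces the rejected trial step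
   to pass the Armijo test after all. *)

Lemma vsum_ext n u v : (forall s, (s < n)%nat -> u s = v s) -> vsum n u = vsum n v.
Proof.
  induction n as [|n IH]; simpl; intros H; [reflexivity|].
  rewrite IH by (intros; apply H; lia). rewrite H by lia. reflexivity.
Qed.

Lemma vsum_scal n c u : vsum n (fun s => c * u s) = c * vsum n u.
Proof. induction n as [|n IH]; simpl; [ring|]. rewrite IH; ring. Qed.

Lemma vsum_add n u v : vsum n (fun s => u s + v s) = vsum n u + vsum n v.
Proof. induction n as [|n IH]; simpl; [ring|]. rewrite IH; ring. Qed.

Lemma vsum_le n u v : (forall s, (s < n)%nat -> u s <= v s) -> vsum n u <= vsum n v.
Proof.
  induction n as [|n IH]; simpl; intros H; [lra|].
  assert (vsum n u <= vsum n v) by (apply IH; intros; apply H; lia).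
  assert (u n <= v n) by (apply H; lia).
  lra.
Qed.

Lemma vsum_const n c : vsum n (fun _ => c) = INR n * c.
Proof. induction n as [|n IH]; simpl vsum; [simpl; ring|]. rewrite IH, S_INR; ring. Qed.

Lemma vsum_nonneg n u : (forall s, (s < n)%nat -> 0 <= u s) -> 0 <= vsum n u.
Proof. intros H. rewrite <- (Rmult_0_r (INR n)), <- vsum_const. apply vsum_le; auto. Qed.

Lemma vsum_term_le n u i :
  (forall s, (s < n)%nat -> 0 <= u s) -> (i < n)%nat -> u i <= vsum n u.
Proof.
  induction n as [|n IH]; intros H Hi; [lia|]. simpl.
  assert (0 <= vsum n u) by (apply vsum_nonneg; intros; apply H; lia).
  assert (0 <= u n) by (apply H; lia).
  destruct (Nat.eq_dec i n) as [->|Hin]; [lra|].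
  assert (u i <= vsum n u) by (apply IH; [intros; apply H|]; lia).
  lra.
Qed.

Lemma vsum_single n i c :
  (i < n)%nat -> vsum n (fun s => if Nat.eqb s i then c else 0) = c.
Proof.
  induction n as [|n IH]; intros Hi; [lia|]. simpl.
  destruct (Nat.eq_dec i n) as [->|Hin].
  - rewrite (vsum_ext n _ (fun _ => 0)), vsum_const, Nat.eqb_refl; [ring|].
    intros s Hs. destruct (Nat.eqb_spec s n); [lia|reflexivity].
  - rewrite IH by lia. destruct (Nat.eqb_spec n i); [lia|ring].
Qed.

Lemma Rabs_vsum_le n u : Rabs (vsum n u) <= vsum n (fun s => Rabs (u s)).
Proof.
  induction n as [|n IH]; simpl; [rewrite Rabs_R0; lra|].
  eapply Rle_trans; [apply Rabs_triang|lra].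
Qed.

Lemma dot_vsub_l n u v d : dot n (vsub u v) d = dot n u d - dot n v d.
Proof.
  unfold dot, vsub.
  rewrite (vsum_ext n _ (fun s => u s * d s + -1 * (v s * d s))) by (intros; ring).
  rewrite vsum_add, vsum_scal; ring.
Qed.

Lemma dot_scal_r n u h d : dot n u (fun s => h * d s) = h * dot n u d.
Proof. unfold dot. rewrite <- vsum_scal. apply vsum_ext; intros; ring. Qed.

Lemma dot_abs_le n u v eta :
  (forall s, (s < n)%nat -> Rabs (v s) <= eta) ->
  Rabs (dot n u v) <= vsum n (fun s => Rabs (u s)) * eta.
Proof.
  intros H. unfold dot. eapply Rle_trans; [apply Rabs_vsum_le|].
  rewrite Rmult_comm, <- vsum_scal. apply vsum_le. intros s Hs.
  rewrite Rabs_mult. specialize (H s Hs).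
  pose proof (Rabs_pos (u s)). pose proof (Rabs_pos (v s)). nra.
Qed.

Lemma dot_sub_abs_le n u w d e M :
  0 <= M -> (forall s, (s < n)%nat -> Rabs (u s - w s) <= e) ->
  (forall s, (s < n)%nat -> Rabs (d s) <= M) ->
  Rabs (dot n u d - dot n w d) <= INR n * e * M.
Proof.
  intros HM Huw Hd. rewrite <- dot_vsub_l.
  eapply Rle_trans; [apply dot_abs_le, Hd|].
  apply Rmult_le_compat_r; [exact HM|].
  rewrite <- vsum_const. apply vsum_le. exact Huw.
Qed.

Lemma dot_dirk n u A i j : (i < n)%nat -> (j < n)%nat -> i <> j ->
  dot n u (dirk A i j) = u j / A j - u i / A i.
Proof.
  intros Hi Hj Hij. unfold dot.
  rewrite (vsum_ext n _ (fun s => (if Nat.eqb s i then - (u i / A i) else 0)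
                                  + (if Nat.eqb s j then u j / A j else 0))).
  - rewrite vsum_add, !vsum_single by assumption. ring.
  - intros s Hs. unfold dirk.
    destruct (Nat.eqb_spec s i), (Nat.eqb_spec s j); subst; try lia; unfold Rdiv; ring.
Qed.

Lemma dirk_uniformly_bounded n A : (forall s, (s < n)%nat -> 0 < A s) ->
  exists M, 0 <= M /\ forall i j s, (i < n)%nat -> (j < n)%nat -> Rabs (dirk A i j s) <= M.
Proof.
  intros HA.
  assert (Hinv : forall s, (s < n)%nat -> 0 <= 1 / A s)
    by (intros s Hs; apply Rlt_le, Rdiv_lt_0_compat; [lra|auto]).
  exists (vsum n (fun s => 1 / A s)). split; [apply vsum_nonneg, Hinv|].
  intros i j s Hi Hj. unfold dirk.
  destruct (Nat.eqb s i); [|destruct (Nat.eqb s j)].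
  - rewrite Rabs_Ropp, Rabs_right by (apply Rle_ge, Hinv, Hi).
    exact (vsum_term_le n (fun s => 1 / A s) i Hinv Hi).
  - rewrite Rabs_right by (apply Rle_ge, Hinv, Hj).
    exact (vsum_term_le n (fun s => 1 / A s) j Hinv Hj).
  - rewrite Rabs_R0. apply vsum_nonneg, Hinv.
Qed.

Lemma vadd_scal_dist_le y d z c M r1 r2 s : 0 <= c -> c * M <= r2 ->
  Rabs (d s) <= M -> Rabs (y s - z s) <= r1 -> Rabs (vadd y (vscal c d) s - z s) <= r1 + r2.
Proof.
  intros Hc HcM Hd Hy. unfold vadd, vscal.
  replace (y s + c * d s - z s) with ((y s - z s) + c * d s) by ring.
  eapply Rle_trans; [apply Rabs_triang|]. rewrite Rabs_mult, (Rabs_right c) by lra.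
  pose proof (Rabs_pos (d s)). nra.
Qed.

Lemma Rmult_div_succ_lt a b : 0 < a -> 0 <= b -> b * (a / (b + 1)) < a.
Proof.
  intros Ha Hb. apply (Rmult_lt_reg_r (b + 1)); [lra|].
  replace (b * (a / (b + 1)) * (b + 1)) with (a * b) by (field; lra). nra.
Qed.

Lemma norm_scal n h d : norm n (fun s => h * d s) = Rabs h * norm n d.
Proof.
  unfold norm, dot.
  rewrite (vsum_ext n _ (fun s => (h * h) * (d s * d s))) by (intros; ring).
  rewrite vsum_scal, sqrt_mult_alt by nra.
  rewrite <- sqrt_Rsqr_abs. reflexivity.
Qed.

Lemma norm_lt_of_coords n r : 0 < r -> exists eta, 0 < eta /\
  forall v, (forall s, (s < n)%nat -> Rabs (v s) <= eta) -> norm n v < r.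
Proof.
  intros Hr. pose proof (pos_INR n) as Hn.
  set (eta := r / (INR n + 1)).
  assert (Heta : 0 < eta) by (apply Rdiv_lt_0_compat; lra).
  exists eta. split; [exact Heta|]. intros v Hv. unfold norm, dot.
  assert (vsum n (fun s => v s * v s) <= INR n * (eta * eta)).
  { rewrite <- vsum_const. apply vsum_le. intros s Hs. specialize (Hv s Hs).
    pose proof (Rsqr_abs (v s)) as Hsq. unfold Rsqr in Hsq.
    pose proof (Rabs_pos (v s)). nra. }
  assert (INR n * (eta * eta) < r * r).
  { replace r with (eta * (INR n + 1)) by (unfold eta; field; lra). nra. }
  rewrite <- (sqrt_square r) by lra.
  apply sqrt_lt_1_alt. split; [apply vsum_nonneg; intros; nra|lra].
Qed.

Definition strictly_increasing (phi : nat -> nat) : Prop :=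
  forall p, (phi p < phi (S p))%nat.

Lemma strictly_increasing_lt phi :
  strictly_increasing phi -> forall p q, (p < q)%nat -> (phi p < phi q)%nat.
Proof. intros H p q Hpq. induction Hpq; [apply H|]. specialize (H m). lia. Qed.

Lemma strictly_increasing_ge phi : strictly_increasing phi -> forall p, (p <= phi p)%nat.
Proof. intros H p. induction p; [lia|]. specialize (H p). lia. Qed.

Lemma Un_cv_subseq u L phi :
  strictly_increasing phi -> Un_cv u L -> Un_cv (fun p => u (phi p)) L.
Proof.
  intros Hphi Hu e He. destruct (Hu e He) as [N HN]. exists N. intros p Hp.
  apply HN. pose proof (strictly_increasing_ge phi Hphi p). lia.
Qed.

Lemma Un_cv_bounds u L a b : Un_cv u L -> (forall p, a <= u p <= b) -> a <= L <= b.
Proof.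
  intros Hu Hab.
  assert (Hcst : forall c, Un_cv (fun _ => c) c)
    by (intros c e He; exists O; intros; unfold R_dist; rewrite Rminus_diag, Rabs_R0; exact He).
  split.
  - apply (Rle_cv_lim (Un := fun _ => a) (Vn := u)); [apply Hab|apply Hcst|exact Hu].
  - apply (Rle_cv_lim (Un := u) (Vn := fun _ => b)); [apply Hab|exact Hu|apply Hcst].
Qed.

(* [pick N m] is an index [>= N] at which [u] is within [1/(m+1)] of the cluster point. *)
Fixpoint diagonal_subseq (pick : nat -> nat -> nat) (p : nat) : nat :=
  match p with
  | O => pick O O
  | S q => pick (S (diagonal_subseq pick q)) (S q)
  end.

Lemma bounded_seq_cv_subseq (u : nat -> R) a b : (forall k, a <= u k <= b) ->
  exists phi L, strictly_increasing phi /\ Un_cv (fun p => u (phi p)) L.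
Proof.
  intros Hab.
  destruct (Bolzano_Weierstrass u (fun c => a <= c <= b) (compact_P3 a b) Hab) as [L HL].
  assert (Hpick : forall N m, exists p, (N <= p)%nat /\ Rabs (u p - L) < / (INR m + 1)).
  { intros N m.
    assert (Hm : 0 < / (INR m + 1)) by (apply Rinv_0_lt_compat; pose proof (pos_INR m); lra).
    destruct (HL (disc L (mkposreal _ Hm)) N) as [p Hp];
      [exists (mkposreal _ Hm); intros y Hy; exact Hy|].
    exists p; exact Hp. }
  set (pick N m := proj1_sig (constructive_indefinite_description _ (Hpick N m))).
  assert (Hpk : forall N m, (N <= pick N m)%nat /\ Rabs (u (pick N m) - L) < / (INR m + 1))
    by (intros N m; exact (proj2_sig (constructive_indefinite_description _ (Hpick N m)))).
  exists (diagonal_subseq pick), L. split.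
  - intros p. simpl. destruct (Hpk (S (diagonal_subseq pick p)) (S p)). lia.
  - intros e He. destruct (archimed_cor1 e He) as [N [HN1 HN2]].
    exists N. intros p Hp. unfold R_dist.
    assert (Rabs (u (diagonal_subseq pick p) - L) < / (INR p + 1))
      by (destruct p; apply Hpk).
    assert (/ (INR p + 1) <= / INR N).
    { apply Rinv_le_contravar; [apply lt_0_INR; lia|]. apply le_INR in Hp. lra. }
    lra.
Qed.

Lemma bounded_vec_seq_cv_subseq m (u : nat -> vec) (lo hi : vec) :
  (forall k s, (s < m)%nat -> lo s <= u k s <= hi s) ->
  exists phi (xs : vec), strictly_increasing phi /\
    forall s, (s < m)%nat -> Un_cv (fun p => u (phi p) s) (xs s).
Proof.
  induction m as [|m IH]; intros H.
  - exists (fun p => p), (fun _ => 0). split; [intros p; lia|intros; lia].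
  - destruct IH as [phi [xs [Hphi Hxs]]]; [intros; apply H; lia|].
    destruct (bounded_seq_cv_subseq (fun p => u (phi p) m) (lo m) (hi m))
      as [psi [L [Hpsi HL]]]; [intros; apply H; lia|].
    exists (fun p => phi (psi p)), (fun s => if Nat.eqb s m then L else xs s). split.
    + intros p. apply strictly_increasing_lt; auto.
    + intros s Hs. destruct (Nat.eqb_spec s m) as [->|Hsm]; [exact HL|].
      apply (Un_cv_subseq (fun p => u (phi p) s)); [exact Hpsi|]. apply Hxs; lia.
Qed.

Lemma eventually_forall_lt m (P : nat -> nat -> Prop) :
  (forall s, (s < m)%nat -> exists N, forall p, (N <= p)%nat -> P s p) ->
  exists N, forall p, (N <= p)%nat -> forall s, (s < m)%nat -> P s p.
Proof.
  induction m as [|m IH]; intros H; [exists O; intros; lia|].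
  destruct IH as [N1 H1]; [intros; apply H; lia|].
  destruct (H m ltac:(lia)) as [N2 H2]. exists (Nat.max N1 N2).
  intros p Hp s Hs. destruct (Nat.eq_dec s m) as [->|Hsm]; [apply H2; lia|apply H1; lia].
Qed.

Lemma radius_forall_lt m (P : nat -> R -> Prop) :
  (forall s r r', 0 < r' <= r -> P s r -> P s r') ->
  (forall s, (s < m)%nat -> exists r, 0 < r /\ P s r) ->
  exists r, 0 < r /\ forall s, (s < m)%nat -> P s r.
Proof.
  intros Hmono. induction m as [|m IH]; intros H; [exists 1; split; [lra|intros; lia]|].
  destruct IH as [r1 [Hr1 H1]]; [intros; apply H; lia|].
  destruct (H m ltac:(lia)) as [r2 [Hr2 H2]].
  assert (Hr : 0 < Rmin r1 r2) by (apply Rmin_pos; assumption).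
  exists (Rmin r1 r2). split; [exact Hr|]. intros s Hs.
  destruct (Nat.eq_dec s m) as [->|Hsm].
  - apply (Hmono m r2); [split; [exact Hr|apply Rmin_r]|exact H2].
  - apply (Hmono s r1); [split; [exact Hr|apply Rmin_l]|apply H1; lia].
Qed.

Lemma terms_cv0_of_bounded_partial_sums (u : nat -> R) B :
  (forall k, 0 < u k) -> (forall k, vsum k u <= B) ->
  forall e, 0 < e -> exists N, forall k, (N <= k)%nat -> u k < e.
Proof.
  intros Hpos HB e He.
  destruct (growing_cv (fun k => vsum k u)) as [Ssum HS].
  - intros k. simpl. pose proof (Hpos k). lra.
  - exists B. intros r [k ->]. apply HB.
  - destruct (HS (e / 2) ltac:(lra)) as [N HN]. exists N. intros k Hk.
    pose proof (HN k Hk) as H1. pose proof (HN (S k) ltac:(lia)) as H2.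
    unfold R_dist in H1, H2. simpl in H2.
    destruct (Rabs_def2 _ _ H1), (Rabs_def2 _ _ H2). lra.
Qed.

Lemma derivable_pt_lim_line n U F G x d c :
  has_gradient_on n U F G -> U (vadd x (vscal c d)) ->
  derivable_pt_lim (fun t => F (vadd x (vscal t d))) c (dot n (G (vadd x (vscal c d))) d).
Proof.
  intros HF HU e He.
  set (y := vadd x (vscal c d)) in *.
  set (N := norm n d).
  assert (HN : 0 <= N) by apply sqrt_pos.
  destruct (HF y HU (e / (2 * (N + 1)))) as [r [Hr Hlin]]; [apply Rdiv_lt_0_compat; lra|].
  assert (Hr' : 0 < r / (N + 1)) by (apply Rdiv_lt_0_compat; lra).
  exists (mkposreal _ Hr'). intros h Hh0 Hh. simpl in Hh.
  replace (vadd x (vscal (c + h) d)) with (vadd y (vscal h d))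
    by (apply functional_extensionality; intros s; unfold y, vadd, vscal; ring).
  specialize (Hlin (vadd y (vscal h d))).
  replace (vsub (vadd y (vscal h d)) y) with (fun s => h * d s) in Hlin
    by (apply functional_extensionality; intros s; unfold vadd, vsub, vscal; ring).
  rewrite norm_scal, dot_scal_r in Hlin. fold N in Hlin.
  assert (Hah : 0 < Rabs h) by (apply Rabs_pos_lt; exact Hh0).
  assert (Hhr : Rabs h * (N + 1) < r).
  { apply (Rmult_lt_compat_r (N + 1)) in Hh; [|lra].
    replace (r / (N + 1) * (N + 1)) with r in Hh by (field; lra). exact Hh. }
  specialize (Hlin ltac:(nra)).
  set (Q := F (vadd y (vscal h d)) - F y - h * dot n (G y) d) in Hlin.
  replace ((F (vadd y (vscal h d)) - F y) / h - dot n (G y) d) with (Q / h)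
    by (unfold Q; field; exact Hh0).
  unfold Rdiv. rewrite Rabs_mult, Rabs_inv.
  apply (Rmult_lt_reg_r (Rabs h)); [exact Hah|].
  replace (Rabs Q * / Rabs h * Rabs h) with (Rabs Q) by (field; lra).
  assert (e / (2 * (N + 1)) * (Rabs h * N) < e * Rabs h).
  { replace (e / (2 * (N + 1)) * (Rabs h * N)) with (e * Rabs h * (N / (2 * (N + 1))))
      by (field; lra).
    assert (N / (2 * (N + 1)) < 1).
    { apply (Rmult_lt_reg_r (2 * (N + 1))); [lra|].
      replace (N / (2 * (N + 1)) * (2 * (N + 1))) with N by (field; lra). lra. }
    assert (0 < e * Rabs h) by (apply Rmult_lt_0_compat; lra).
    nra. }
  lra.
Qed.

(* The step length [theta^m * gamma_k], recovered from the iterates: only the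
   [j]-th coordinate of [dirk A i j] has coefficient [1 / A j]. *)
Definition step_length (A x x' : vec) (j : nat) : R := A j * (x' j - x j).

Section BcvStep.

Variables (n : nat) (lo hi A : vec) (F : vec -> R) (G : vec -> vec)
  (eps delta sigma theta : R).
Hypothesis HA : forall s, (s < n)%nat -> 0 < A s.
Hypothesis Heps : 0 < eps.
Hypothesis Hdelta : 0 < delta.
Hypothesis Htheta : 0 < theta < 1.

Lemma admissible_neq x i j : admissible n lo hi A G eps delta x i j -> i <> j.
Proof. intros (_ & _ & _ & _ & Hh) ->. lra. Qed.

Lemma admissible_eps_le_gammak x i j :
  admissible n lo hi A G eps delta x i j -> eps <= gammak lo hi A x i j.
Proof.
  intros (Hi & Hj & Hm & Hp & _). unfold Iminus, Iplus, gammak in *.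
  pose proof (HA i Hi). pose proof (HA j Hj).
  apply Rmin_glb.
  - replace eps with (A i * (eps / A i)) by (field; lra). nra.
  - replace eps with (A j * (eps / A j)) by (field; lra). nra.
Qed.

Lemma admissible_slope x i j :
  admissible n lo hi A G eps delta x i j -> dot n (G x) (dirk A i j) <= - delta.
Proof.
  intros Had. pose proof (admissible_neq x i j Had) as Hij.
  destruct Had as (Hi & Hj & _ & _ & Hh). unfold hcoef in Hh.
  rewrite dot_dirk by assumption. lra.
Qed.

Lemma box_vadd_dirk x i j c : box n lo hi x -> (i < n)%nat -> (j < n)%nat -> i <> j ->
  0 <= c <= gammak lo hi A x i j -> box n lo hi (vadd x (vscal c (dirk A i j))).
Proof.
  intros Hx Hi Hj Hij Hc s Hs. unfold vadd, vscal, dirk, gammak in *.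
  pose proof (Rmin_l (A i * (x i - lo i)) (A j * (hi j - x j))).
  pose proof (Rmin_r (A i * (x i - lo i)) (A j * (hi j - x j))).
  destruct (Nat.eqb_spec s i) as [->|Hsi]; [|destruct (Nat.eqb_spec s j) as [->|Hsj]].
  - pose proof (HA i Hi). pose proof (Hx i Hi).
    replace (c * - (1 / A i)) with (- (c / A i)) by (field; lra).
    assert (c / A i <= x i - lo i).
    { apply (Rmult_le_reg_l (A i)); [lra|]. replace (A i * (c / A i)) with c by (field; lra). lra. }
    assert (0 <= c / A i) by (apply Rmult_le_pos; [lra|apply Rlt_le, Rinv_0_lt_compat; lra]).
    lra.
  - pose proof (HA j Hj). pose proof (Hx j Hj).
    replace (c * (1 / A j)) with (c / A j) by (field; lra).
    assert (c / A j <= hi j - x j).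
    { apply (Rmult_le_reg_l (A j)); [lra|]. replace (A j * (c / A j)) with c by (field; lra). lra. }
    assert (0 <= c / A j) by (apply Rmult_le_pos; [lra|apply Rlt_le, Rinv_0_lt_compat; lra]).
    lra.
  - pose proof (Hx s Hs). lra.
Qed.

Section OneStep.

Variables (x x' : vec) (i j : nat).
Hypothesis Hstep : bcv_step n lo hi A F G eps delta sigma theta x i j x'.

Local Notation gam := (gammak lo hi A x i j).
Local Notation lam := (step_length A x x' j).
Local Notation dk := (dirk A i j).

Lemma bcv_step_admissible : admissible n lo hi A G eps delta x i j.
Proof. exact (proj1 Hstep). Qed.

Lemma bcv_step_armijo_exponent : exists m, lam = theta ^ m * gam /\
  x' = vadd x (vscal lam dk) /\
  armijo n lo hi A F G sigma theta x i j m /\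
  forall m', (m' < m)%nat -> ~ armijo n lo hi A F G sigma theta x i j m'.
Proof.
  destruct Hstep as [Had [m [Harm [Hmin Hupd]]]].
  pose proof (admissible_neq x i j Had) as Hij.
  destruct Had as (_ & Hj & _).
  assert (Hlam : lam = theta ^ m * gam).
  { unfold step_length. rewrite Hupd. unfold dirk. rewrite Nat.eqb_refl.
    destruct (Nat.eqb_spec j i) as [->|_]; [lia|].
    pose proof (HA j Hj). field; lra. }
  exists m. split; [exact Hlam|]. split; [|split; assumption].
  rewrite Hlam. apply functional_extensionality; intros s. apply Hupd.
Qed.

Lemma bcv_step_vadd : x' = vadd x (vscal lam dk).
Proof. destruct bcv_step_armijo_exponent as (m & _ & Hx' & _). exact Hx'. Qed.

Lemma bcv_step_length_bounds : 0 < lam <= gam.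
Proof.
  destruct bcv_step_armijo_exponent as (m & Hlam & _).
  pose proof (admissible_eps_le_gammak x i j bcv_step_admissible).
  assert (0 < theta ^ m) by (apply pow_lt; lra).
  assert (theta ^ m <= 1) by (rewrite <- (pow1 m); apply pow_incr; lra).
  rewrite Hlam. split; nra.
Qed.

Lemma bcv_step_decrease : F x' <= F x + sigma * lam * dot n (G x) dk.
Proof.
  destruct bcv_step_armijo_exponent as (m & Hlam & Hx' & Harm & _).
  rewrite Hlam, Hx', Hlam. exact Harm.
Qed.

(* A step shorter than [eps <= gamma_k] was obtained by backtracking at least
   once, so the Armijo test failed at the previous trial step [lam / theta]. *)
Lemma bcv_step_backtrack : lam < eps ->
  lam / theta <= gam /\
  F (vadd x (vscal (lam / theta) dk)) > F x + sigma * (lam / theta) * dot n (G x) dk.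
Proof.
  intros Hsmall.
  destruct bcv_step_armijo_exponent as (m & Hlam & _ & _ & Hmin).
  pose proof (admissible_eps_le_gammak x i j bcv_step_admissible).
  destruct m as [|m]; [rewrite Hlam in Hsmall; simpl in Hsmall; lra|].
  replace (lam / theta) with (theta ^ m * gam) by (rewrite Hlam; simpl; field; lra).
  split.
  - assert (0 < theta ^ m) by (apply pow_lt; lra).
    assert (theta ^ m <= 1) by (rewrite <- (pow1 m); apply pow_incr; lra).
    nra.
  - apply Rnot_le_gt. apply (Hmin m). lia.
Qed.

End OneStep.
End BcvStep.

Section BcvRun.

Variables (n : nat) (lo hi A : vec) (F : vec -> R) (G : vec -> vec) (U : vec -> Prop)
  (eps delta sigma theta : R) (x : nat -> vec) (ii jj : nat -> nat).
Hypothesis HA : forall s, (s < n)%nat -> 0 < A s.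
Hypothesis HU : forall y, box n lo hi y -> U y.
Hypothesis HF : has_gradient_on n U F G.
Hypothesis HG : grad_continuous_on n U G.
Hypothesis Hsigma : 0 < sigma < 1.
Hypothesis Htheta : 0 < theta < 1.
Hypothesis Hdelta : 0 < delta.
Hypothesis Heps : 0 < eps.
Hypothesis Hx0 : box n lo hi (x O).
Hypothesis Hrun :
  forall k, bcv_step n lo hi A F G eps delta sigma theta (x k) (ii k) (jj k) (x (S k)).

Local Notation lam k := (step_length A (x k) (x (S k)) (jj k)).
Local Notation dk k := (dirk A (ii k) (jj k)).

Lemma run_admissible k : admissible n lo hi A G eps delta (x k) (ii k) (jj k).
Proof. exact (bcv_step_admissible n lo hi A F G eps delta sigma theta _ _ _ _ (Hrun k)). Qed.

Lemma run_neq k : ii k <> jj k.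
Proof. exact (admissible_neq n lo hi A G eps delta Hdelta _ _ _ (run_admissible k)). Qed.

Lemma run_length_bounds k : 0 < lam k <= gammak lo hi A (x k) (ii k) (jj k).
Proof.
  exact (bcv_step_length_bounds n lo hi A F G eps delta sigma theta HA Heps Hdelta Htheta
           _ _ _ _ (Hrun k)).
Qed.

Lemma run_in_box k : box n lo hi (x k).
Proof.
  induction k as [|k IH]; [exact Hx0|].
  destruct (run_admissible k) as (Hi & Hj & _).
  pose proof (run_length_bounds k).
  rewrite (bcv_step_vadd n lo hi A F G eps delta sigma theta HA Hdelta _ _ _ _ (Hrun k)).
  apply box_vadd_dirk; auto using run_neq; lra.
Qed.

Lemma run_decrease k : F (x (S k)) <= F (x k) - sigma * delta * lam k.
Proof.
  pose proof (bcv_step_decrease n lo hi A F G eps delta sigma theta HA Hdelta _ _ _ _ (Hrun k)).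
  pose proof (admissible_slope n lo hi A G eps delta Hdelta _ _ _ (run_admissible k)).
  pose proof (run_length_bounds k).
  assert (0 < sigma * lam k) by nra.
  nra.
Qed.

Lemma run_antitone k q : (k <= q)%nat -> F (x q) <= F (x k).
Proof.
  induction 1 as [|q _ IH]; [lra|].
  pose proof (run_decrease q). pose proof (run_length_bounds q).
  assert (0 < sigma * delta * lam q) by (apply Rmult_lt_0_compat; nra).
  lra.
Qed.

Lemma run_partial_sum k : F (x k) <= F (x O) - sigma * delta * vsum k (fun p => lam p).
Proof. induction k as [|k IH]; simpl; [lra|]. pose proof (run_decrease k). lra. Qed.

(* Mean value theorem on the segment to the rejected trial point. *)
Lemma run_backtrack_slope k : lam k < eps -> exists c, 0 < c < lam k / theta /\
  box n lo hi (vadd (x k) (vscal c (dk k))) /\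
  dot n (G (vadd (x k) (vscal c (dk k)))) (dk k) > sigma * dot n (G (x k)) (dk k).
Proof.
  intros Hsmall.
  destruct (bcv_step_backtrack n lo hi A F G eps delta sigma theta HA Heps Hdelta Htheta
              _ _ _ _ (Hrun k) Hsmall) as [Hle Hfail].
  destruct (run_admissible k) as (Hi & Hj & _).
  pose proof (run_length_bounds k).
  set (t := lam k / theta) in *.
  assert (Ht : 0 < t) by (apply Rdiv_lt_0_compat; lra).
  assert (Hbox : forall c, 0 <= c <= t -> box n lo hi (vadd (x k) (vscal c (dk k))))
    by (intros c Hc; apply box_vadd_dirk; auto using run_in_box, run_neq; lra).
  destruct (MVT_cor2 (fun c => F (vadd (x k) (vscal c (dk k))))
              (fun c => dot n (G (vadd (x k) (vscal c (dk k)))) (dk k)) 0 t Ht)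
    as [c [Hmvt Hc]].
  { intros c Hc. apply derivable_pt_lim_line with U; [exact HF|apply HU, Hbox, Hc]. }
  exists c. split; [exact Hc|]. split; [apply Hbox; lra|].
  replace (vadd (x k) (vscal 0 (dk k))) with (x k) in Hmvt
    by (apply functional_extensionality; intros s; unfold vadd, vscal; ring).
  assert (Hct : dot n (G (vadd (x k) (vscal c (dk k)))) (dk k) * t
                > sigma * dot n (G (x k)) (dk k) * t) by (simpl in Hmvt; nra).
  apply Rmult_gt_reg_r with t; [exact Ht|]. lra.
Qed.

Section Accumulation.

Variables (phi : nat -> nat) (xs : vec).
Hypothesis Hphi : strictly_increasing phi.
Hypothesis Hxs : forall s, (s < n)%nat -> Un_cv (fun p => x (phi p) s) (xs s).

Lemma accumulation_in_box : box n lo hi xs.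
Proof.
  intros s Hs. apply (Un_cv_bounds (fun p => x (phi p) s)); [apply Hxs, Hs|].
  intros p. apply run_in_box, Hs.
Qed.

Lemma run_near_accumulation eta : 0 < eta -> exists P, forall p, (P <= p)%nat ->
  forall s, (s < n)%nat -> Rabs (x (phi p) s - xs s) <= eta.
Proof.
  intros Heta. apply (eventually_forall_lt n (fun s p => Rabs (x (phi p) s - xs s) <= eta)).
  intros s Hs. destruct (Hxs s Hs eta Heta) as [N HN].
  exists N. intros p Hp. apply Rlt_le, HN. lia.
Qed.

Lemma run_bounded_below : exists L, forall k, L <= F (x k).
Proof.
  destruct (HF xs (HU xs accumulation_in_box) 1 Rlt_0_1) as [r [Hr Hlin]].
  destruct (norm_lt_of_coords n r Hr) as [eta [Heta Hnorm]].
  destruct (run_near_accumulation eta Heta) as [P HP].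
  exists (F xs - vsum n (fun s => Rabs (G xs s)) * eta - r). intros k.
  set (y := x (phi (P + k)%nat)).
  assert (Hy : forall s, (s < n)%nat -> Rabs (vsub y xs s) <= eta)
    by (intros s Hs; apply HP; [lia|exact Hs]).
  pose proof (Hnorm _ Hy) as Hyr. specialize (Hlin y Hyr).
  pose proof (dot_abs_le n (G xs) (vsub y xs) eta Hy).
  assert (Hneg : forall a, - Rabs a <= a)
    by (intros a; pose proof (Rle_abs (- a)); rewrite Rabs_Ropp in *; lra).
  pose proof (Hneg (dot n (G xs) (vsub y xs))).
  pose proof (Hneg (F y - F xs - dot n (G xs) (vsub y xs))).
  assert (Hk : (k <= phi (P + k))%nat)
    by (pose proof (strictly_increasing_ge phi Hphi (P + k)); lia).
  pose proof (run_antitone k _ Hk).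
  unfold y in *. lra.
Qed.

Lemma run_length_cv0 : forall e, 0 < e -> exists N, forall k, (N <= k)%nat -> lam k < e.
Proof.
  destruct run_bounded_below as [L HL].
  assert (Hsd : 0 < sigma * delta) by nra.
  apply (terms_cv0_of_bounded_partial_sums (fun p => lam p) ((F (x O) - L) / (sigma * delta))).
  - intros k. apply run_length_bounds.
  - intros k. pose proof (run_partial_sum k). pose proof (HL k).
    apply (Rmult_le_reg_r (sigma * delta)); [exact Hsd|].
    replace ((F (x O) - L) / (sigma * delta) * (sigma * delta)) with (F (x O) - L)
      by (field; lra).
    lra.
Qed.

Lemma gradient_uniform_near e : 0 < e -> exists eta, 0 < eta /\
  forall y z, U y -> U z -> (forall s, (s < n)%nat -> Rabs (y s - xs s) <= eta) ->
  (forall s, (s < n)%nat -> Rabs (z s - xs s) <= eta) ->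
  forall s, (s < n)%nat -> Rabs (G y s - G z s) < e.
Proof.
  intros He.
  destruct (radius_forall_lt n
              (fun s r => forall y, U y -> norm n (vsub y xs) < r -> Rabs (G y s - G xs s) < e / 2))
    as [r [Hr Hcont]].
  - intros s r r' Hr' HP y Hy Hny. apply HP; [exact Hy|lra].
  - intros s Hs. destruct (HG xs (HU xs accumulation_in_box) s Hs (e / 2)) as [r [Hr H]];
      [lra|].
    exists r. split; [exact Hr|]. intros y Hy Hny. apply H; assumption.
  - destruct (norm_lt_of_coords n r Hr) as [eta [Heta Hnorm]].
    exists eta. split; [exact Heta|]. intros y z Hy Hz Hyc Hzc s Hs.
    pose proof (Hcont s Hs y Hy (Hnorm _ Hyc)).
    pose proof (Hcont s Hs z Hz (Hnorm _ Hzc)).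
    replace (G y s - G z s) with ((G y s - G xs s) - (G z s - G xs s)) by ring.
    eapply Rle_lt_trans; [apply Rabs_triang|]. rewrite Rabs_Ropp. lra.
Qed.

(* The slope along [d_k] at the trial point exceeds [sigma * D_k] yet differs
   from [D_k <= - delta] by less than [(1 - sigma) * delta]. *)
Lemma run_accumulation_false : False.
Proof.
  destruct (dirk_uniformly_bounded n A HA) as [M [HM0 Hdirk]].
  pose proof (pos_INR n) as Hn.
  assert (Hsd : 0 < (1 - sigma) * delta) by nra.
  set (e := (1 - sigma) * delta / (INR n * M + 1)).
  assert (He : 0 < e) by (apply Rdiv_lt_0_compat; nra).
  assert (HeM : INR n * e * M < (1 - sigma) * delta).
  { replace (INR n * e * M) with (INR n * M * e) by ring.
    apply Rmult_div_succ_lt; [exact Hsd|apply Rmult_le_pos; assumption]. }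
  destruct (gradient_uniform_near e He) as [eta [Heta Hnear]].
  destruct (run_near_accumulation (eta / 2) ltac:(lra)) as [P HP].
  set (r := eta / (2 * (M + 1))).
  assert (Hr : 0 < r) by (apply Rdiv_lt_0_compat; lra).
  destruct (run_length_cv0 (Rmin eps (theta * r))) as [N HN]; [apply Rmin_pos; nra|].
  set (k := phi (Nat.max P N)).
  assert (Hlam : lam k < Rmin eps (theta * r))
    by (apply HN; pose proof (strictly_increasing_ge phi Hphi (Nat.max P N)); unfold k; lia).
  pose proof (Rmin_l eps (theta * r)). pose proof (Rmin_r eps (theta * r)).
  destruct (run_backtrack_slope k) as [c [Hc [Hbox Hslope]]]; [lra|].
  destruct (run_admissible k) as (Hi & Hj & _).
  assert (Hcr : c < r).
  { apply Rlt_trans with (lam k / theta); [apply Hc|].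
    apply (Rmult_lt_reg_r theta); [lra|].
    replace (lam k / theta * theta) with (lam k) by (field; lra). lra. }
  assert (HcM : c * M <= eta / 2).
  { assert (r * (M + 1) = eta / 2) by (unfold r; field; lra). nra. }
  set (yc := vadd (x k) (vscal c (dk k))) in *.
  assert (Hxk : forall s, (s < n)%nat -> Rabs (x k s - xs s) <= eta / 2)
    by (intros s Hs; apply HP; [lia|exact Hs]).
  assert (Hgrad : forall s, (s < n)%nat -> Rabs (G yc s - G (x k) s) <= e).
  { intros s Hs. apply Rlt_le, Hnear; auto using run_in_box.
    - intros s' Hs'. replace eta with (eta / 2 + eta / 2) by field.
      apply vadd_scal_dist_le with M; auto; lra.
    - intros s' Hs'. pose proof (Hxk s' Hs'). lra. }
  pose proof (dot_sub_abs_le n (G yc) (G (x k)) (dk k) e M HM0 Hgrad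
                (fun s _ => Hdirk _ _ s Hi Hj)).
  pose proof (Rle_abs (dot n (G yc) (dk k) - dot n (G (x k)) (dk k))).
  pose proof (admissible_slope n lo hi A G eps delta Hdelta _ _ _ (run_admissible k)).
  assert ((1 - sigma) * (- dot n (G (x k)) (dk k) - delta) >= 0) by nra.
  nra.
Qed.

End Accumulation.

Lemma bcv_run_false : False.
Proof.
  destruct (bounded_vec_seq_cv_subseq n x lo hi) as [phi [xs [Hphi Hxs]]];
    [intros k; apply run_in_box|].
  exact (run_accumulation_false phi xs Hphi Hxs).
Qed.

End BcvRun.

Theorem proposition4p1
  (n : nat)
  (* limit problem data *)
  (alo ahi a : vec) (beta : R) (f : vec -> R)
  (* approximating problems data, indexed by l *)
  (alo_l ahi_l a_l : nat -> vec) (beta_l : nat -> R)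
  (f_l : nat -> vec -> R) (g_l : nat -> vec -> vec)
  (* (A2) *)
  (HDne : forall l, exists x, Dset n (alo_l l) (ahi_l l) (a_l l) (beta_l l) x)
  (Hapos : forall l i, (i < n)%nat -> 0 < a_l l i)
  (Hlohi : forall l i, (i < n)%nat -> alo_l l i < ahi_l l i)
  (Hcvlo : vec_cv n alo_l alo)
  (Hcvhi : vec_cv n ahi_l ahi)
  (Hcva : vec_cv n a_l a)
  (Hcvbeta : Un_cv beta_l beta)
  (* (A3) *)
  (HC1 : forall l, C1_near n (box n (alo_l l) (ahi_l l)) (f_l l) (g_l l))
  (Hgrad : forall (y : nat -> vec) (ybar : vec),
      (forall l, Dset n (alo_l l) (ahi_l l) (a_l l) (beta_l l) (y l)) ->
      vec_cv n y ybar ->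
      exists gbar, clarke_subgrad n f ybar gbar /\
                   vec_cv n (fun l => g_l l (y l)) gbar)
  (* parameters of Method (BCV) *)
  (sigma theta : R) (delta eps : nat -> R)
  (Hsigma : 0 < sigma < 1) (Htheta : 0 < theta < 1)
  (Hdpos : forall l, 0 < delta l) (Hddec : Un_decreasing delta) (Hdcv : Un_cv delta 0)
  (Hepos : forall l, 0 < eps l) (Hedec : Un_decreasing eps) (Hecv : Un_cv eps 0)
  (* stage l >= 1, started from z^{l-1} in D_{l-1} *)
  (l : nat) (Hl : (1 <= l)%nat)
  (z : vec) (Hz : Dset n (alo_l (l - 1)%nat) (ahi_l (l - 1)%nat) (a_l (l - 1)%nat)
                        (beta_l (l - 1)%nat) z)
  (* a run of the inner iterations of stage l *)
  (x : nat -> vec) (ii jj : nat -> nat)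
  (Hx0 : is_proj n (Dset n (alo_l l) (ahi_l l) (a_l l) (beta_l l)) z (x O))
  (Hstep : forall k,
      (exists i j, admissible n (alo_l l) (ahi_l l) (a_l l) (g_l l) (eps l) (delta l)
                              (x k) i j) ->
      bcv_step n (alo_l l) (ahi_l l) (a_l l) (f_l l) (g_l l) (eps l) (delta l)
               sigma theta (x k) (ii k) (jj k) (x (S k))) :
  exists K : nat,
    ~ (exists i j, admissible n (alo_l l) (ahi_l l) (a_l l) (g_l l) (eps l) (delta l)
                              (x K) i j).
Proof.
  destruct (HC1 l) as [U [_ [HU [HF HG]]]].
  destruct Hx0 as [[Hx0box _] _].
  apply NNPP. intros Hstall.
  apply (bcv_run_false n (alo_l l) (ahi_l l) (a_l l) (f_l l) (g_l l) U (eps l) (delta l)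
           sigma theta x ii jj); auto.
  intros k. apply Hstep.
  apply NNPP. intros Hk. apply Hstall. exists k. exact Hk.
Qed.
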